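(* Let $p_1\neq p_2$ be points of $\beta\mathbb{N}\setminus\mathbb{N}$. Then the closed subspace $X=\{g\in C(\beta\mathbb{N}): g(p_1)=g(p_2)\}$ of $C(\beta\mathbb{N})$ fails the ball fixed point property.
   Context: $\beta\mathbb{N}$ is the Čech–Stone compactification of $\mathbb{N}$. $C(K)$ is the real Banach space of continuous functions on a compact space $K$ with the sup norm. A real Banach space $X$ has the ball fixed point property (BFPP) if every nonexpansive map $T\colon B_X\to B_X$ (i.e. $\|Tx-Ty\|\le\|x-y\|$) has a fixed point, where $B_X$ is the closed unit ball. *)

From HB Require Import structures.
From mathcomp Require Import all_boot all_order all_algebra.
From mathcomp Require Import all_classical all_reals.
From mathcomp Require Import topology normedtype.
Set Implicit Arguments. Unset Strict Implicit. Unset Printing Implicit Defensive.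
Import Order.TTheory GRing.Theory Num.Theory numFieldNormedType.Exports.
Local Open Scope classical_set_scope.
Local Open Scope ring_scope.

(* The Cech-Stone compactification of N, realized as the space of
   ultrafilters on nat with the Stone topology. *)
Record ultrafilter_nat := UltrafilterNat {
  uf : set (set nat);
  uf_setT : uf setT;
  uf_not0 : ~ uf set0;
  uf_up : forall A B : set nat, A `<=` B -> uf A -> uf B;
  uf_inter : forall A B : set nat, uf A -> uf B -> uf (A `&` B);
  uf_ultra : forall A : set nat, uf A \/ uf (~` A)
}.

Notation betaN := ultrafilter_nat.

Definition betaN_open (O : set betaN) : Prop :=
  forall p, O p -> exists A : set nat, uf p A /\ forall q, uf q A -> O q.

(* n \in N embedded in betaN as the principal ultrafilter at n;
   p lies in betaN \ N iff p is not principal. *)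
Definition in_N (p : betaN) : Prop :=
  exists n : nat, forall A : set nat, uf p A <-> A n.

Definition betaN_continuous (R : realType) (f : betaN -> R) : Prop :=
  forall V : set R, open V -> betaN_open (f @^-1` V).

Definition supnorm (R : realType) (f : betaN -> R) : R :=
  sup (range (fun p => `|f p|)).

Definition in_ball (R : realType) (S : set (betaN -> R)) (f : betaN -> R) :=
  S f /\ supnorm f <= 1.

Definition ball_fpp (R : realType) (S : set (betaN -> R)) : Prop :=
  forall T : (betaN -> R) -> (betaN -> R),
    (forall f, in_ball S f -> in_ball S (T f)) ->
    (forall f g, in_ball S f -> in_ball S g ->
       supnorm (T f - T g) <= supnorm (f - g)) ->
    exists f, in_ball S f /\ T f = f.

Definition X_sub (R : realType) (p1 p2 : betaN) : set (betaN -> R) :=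
  fun g => betaN_continuous g /\ g p1 = g p2.
Arguments X_sub R p1 p2 : clear implicits.

From mathcomp Require Import all_boot all_order all_algebra.
From mathcomp Require Import all_classical all_reals.
From mathcomp Require Import topology normedtype.
From mathcomp Require Import lra.
Set Implicit Arguments. Unset Strict Implicit. Unset Printing Implicit Defensive.
Import Order.TTheory GRing.Theory Num.Theory numFieldNormedType.Exports.
Local Open Scope classical_set_scope.
Local Open Scope ring_scope.

(* Choose A with A in p1 and A not in p2, and let w be +-1/(n+1) at the point n
   of N (sign + iff n is in A) and 0 on betaN \ N; w is continuous because
   1/(n+1) tends to 0.  The map g |-> clamp (g + w), clamp being the
   nearest-point retraction of R onto [-1, 1], preserves the unit ball of X
   since w(p1) = w(p2) = 0, and is nonexpansive since clamp is 1-Lipschitz.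
   A fixed point f satisfies f(n) = clamp (f(n) + w(n)) with w(n) <> 0, which
   forces f = 1 on A and f = -1 off A; by continuity f(p1) = 1 and
   f(p2) = -1, so f is not in X. *)

Definition principal_uf (n : nat) : betaN :=
  @UltrafilterNat (fun A => A n) I id (fun A B AB => AB n)
    (fun A B An Bn => conj An Bn) (fun A => EM (A n)).

Lemma ultrafilter_nat_eq (p q : betaN) :
  (forall A, uf p A -> uf q A) -> p = q.
Proof.
move=> pq; have qp A : uf q A -> uf p A.
  move=> qA; case: (uf_ultra p A) => // /pq qnA; exfalso; apply: (@uf_not0 q).
  by apply: uf_up (uf_inter qA qnA) => x [].
case: p q pq qp => [u1 ? ? ? ? ?] [u2 ? ? ? ? ?] /= pq qp.
have eu : u1 = u2 by apply/funext => A; apply/propext; split; [exact: pq|exact: qp].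
by subst u2; congr UltrafilterNat; apply: Prop_irrelevance.
Qed.

Lemma uf_separate (p q : betaN) : p <> q -> exists A, uf p A /\ ~ uf q A.
Proof.
move=> pq; apply: contrapT => nA; apply: pq; apply: ultrafilter_nat_eq => A pA.
by apply: contrapT => qA; apply: nA; exists A.
Qed.

Lemma uf_setC (p : betaN) (A : set nat) : ~ uf p A -> uf p (~` A).
Proof. by case: (uf_ultra p A). Qed.

Lemma uf_nonempty (q : betaN) (A : set nat) : uf q A -> exists n, A n.
Proof.
move=> qA; apply: contrapT => /forallNP A0; apply: (@uf_not0 q).
by apply: uf_up qA => n /A0.
Qed.

Lemma uf_set1 (q : betaN) (n : nat) : uf q [set n] -> q = principal_uf n.
Proof.
move=> qn; apply: ultrafilter_nat_eq => A qA /=.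
by have [m [Am <-]] := uf_nonempty (uf_inter qA qn).
Qed.

Lemma in_NP (p : betaN) : in_N p <-> exists n, p = principal_uf n.
Proof.
split=> [[n pn]|[n ->]]; last by exists n.
by exists n; apply: ultrafilter_nat_eq => A /pn.
Qed.

Lemma principal_uf_inj : injective principal_uf.
Proof. by move=> m n mn; have : uf (principal_uf n) [set m] by rewrite -mn. Qed.

Lemma free_uf_gt (q : betaN) (K : nat) : ~ in_N q -> uf q [set k | (K < k)%N].
Proof.
move=> qfree; have qN1 n : uf q (~` [set n]).
  case: (uf_ultra q [set n]) => // /uf_set1 qn.
  by exfalso; apply: qfree; apply/in_NP; exists n.
elim: K => [|K IH].
  by apply: uf_up (qN1 0%N) => -[|k] // /(_ erefl).
apply: uf_up (uf_inter IH (qN1 K.+1)) => k /= [Kk kK].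
by rewrite ltn_neqAle Kk andbT eq_sym; apply/eqP.
Qed.

Definition uf_pushforward (p : betaN) (phi : nat -> nat) : betaN :=
  @UltrafilterNat (fun B => uf p (phi @^-1` B)) (uf_setT p) (@uf_not0 p)
    (fun A B AB => uf_up (fun n => AB (phi n))) (fun A B => @uf_inter p _ _)
    (fun A => uf_ultra p _).

Section Continuity.
Variable R : realType.
Implicit Types (f g h : betaN -> R) (p q : betaN).

Definition betaN_continuous_eps f := forall p (e : R), 0 < e ->
  exists A, uf p A /\ forall q, uf q A -> `|f q - f p| < e.

Lemma betaN_continuousP f : betaN_continuous f <-> betaN_continuous_eps f.
Proof.
split=> [fc p e e0|fc V oV p /= Vp].
  have [A [pA HA]] := fc _ (ball_open (f p) e) p (ballxx _ e0).
  by exists A; split=> // q /HA; rewrite /ball /= distrC.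
have /nbhs_ballP[e /= e0 eV] := oV _ Vp.
have [A [pA HA]] := fc p e e0.
by exists A; split=> // q /HA qe; apply: eV; rewrite /ball /= distrC.
Qed.

Lemma betaN_continuous_epsD f g :
  betaN_continuous_eps f -> betaN_continuous_eps g -> betaN_continuous_eps (f + g).
Proof.
move=> fc gc p e e0; have e20 : 0 < e / 2 by rewrite divr_gt0.
have [A [pA fA]] := fc p _ e20; have [B [pB gB]] := gc p _ e20.
exists (A `&` B); split=> [|q qAB]; first exact: uf_inter.
have /fA fq : uf q A by apply: uf_up qAB => ? [].
have /gB gq : uf q B by apply: uf_up qAB => ? [].
have -> : (f + g) q - (f + g) p = (f q - f p) + (g q - g p) by rewrite /= addrACA opprD.
by apply: le_lt_trans (ler_normD _ _) _; lra.
Qed.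

Lemma betaN_continuous_eps_comp (k : R -> R) f :
  (forall x y, `|k x - k y| <= `|x - y|) ->
  betaN_continuous_eps f -> betaN_continuous_eps (k \o f).
Proof.
move=> k1 fc p e /(fc p)[A [pA fA]].
by exists A; split=> // q /fA; apply: le_lt_trans (k1 _ _).
Qed.

Lemma betaN_continuous_epsB f g :
  betaN_continuous_eps f -> betaN_continuous_eps g -> betaN_continuous_eps (f - g).
Proof.
move=> fc gc; apply: betaN_continuous_epsD fc _.
by apply: (betaN_continuous_eps_comp (k := -%R)) gc => x y; rewrite -opprD normrN.
Qed.

Lemma betaN_continuous_eps_principal f q (e : R) : betaN_continuous_eps f ->
  0 < e -> exists n, `|f (principal_uf n) - f q| < e.
Proof.
move=> fc /(fc q)[A [qA fA]]; have [n An] := uf_nonempty qA.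
by exists n; apply: fA.
Qed.

Lemma betaN_continuous_eps_uf_const f p (A : set nat) (c : R) :
  betaN_continuous_eps f -> uf p A ->
  (forall n, A n -> f (principal_uf n) = c) -> f p = c.
Proof.
move=> fc pA fAc; apply: contrapT => /eqP fpc.
have /(fc p)[B [pB fB]] : 0 < `|f p - c| by rewrite normr_gt0 subr_eq0.
have [n [/fAc fnc /(fB (principal_uf n))]] := uf_nonempty (uf_inter pA pB).
by rewrite fnc distrC ltxx.
Qed.

Lemma betaN_continuous_eps_bounded h p : ~ in_N p ->
  betaN_continuous_eps h -> exists M, forall q, `|h q| <= M.
Proof.
move=> pfree hc; apply: contrapT => /forallNP hunb.
have large k : exists n, k%:R < `|h (principal_uf n)| + 1.
  have /existsNP[q /negP] := hunb k%:R; rewrite -ltNge => kq.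
  have [n hnq] := betaN_continuous_eps_principal q hc ltr01.
  exists n; have := ler_normD (h q - h (principal_uf n)) (h (principal_uf n)).
  by rewrite subrK distrC; lra.
(* [r] is the limit along [p] of the points [phi k]: compactness of betaN. *)
have [phi phiP] := choice large; set r := uf_pushforward p phi.
have [C [rC hC]] := hc r 1 ltr01.
have hr0 : 0 <= `|h r| + 2 by rewrite addr_ge0.
set K := Num.bound (`|h r| + 2); have hK := archi_boundP hr0.
have [k [Ck Kk]] := uf_nonempty (uf_inter (rC : uf p (phi @^-1` C)) (free_uf_gt K pfree)).
have := hC (principal_uf (phi k)) Ck; have := phiP k.
have := ler_normD (h (principal_uf (phi k)) - h r) (h r); rewrite subrK.
have : K%:R < k%:R :> R by rewrite ltr_nat.
lra.
Qed.

End Continuity.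

Section ExtendByZero.
Variable R : realType.
Variable v : nat -> R.

Definition extend0 (q : betaN) : R :=
  xget 0 [set r | exists n, q = principal_uf n /\ r = v n].

Lemma extend0_principal n : extend0 (principal_uf n) = v n.
Proof.
apply: xget_unique; first by exists n.
by move=> _ [m [/principal_uf_inj -> ->]].
Qed.

Lemma extend0_free q : ~ in_N q -> extend0 q = 0.
Proof.
move=> qfree; apply: xgetPN => _ [n [qn _]].
by apply: qfree; apply/in_NP; exists n.
Qed.

Lemma extend0_continuous :
  (forall e : R, 0 < e -> exists K, forall n, (K < n)%N -> `|v n| < e) ->
  betaN_continuous_eps extend0.
Proof.
move=> v0 p e e0; have [/in_NP[n ->]|pfree] := pselect (in_N p).
  exists [set n]; split=> // q /uf_set1 ->.
  by rewrite subrr normr0.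
have [K vK] := v0 e e0; exists [set k | (K < k)%N].
split=> [|q qK]; first exact: free_uf_gt.
rewrite (extend0_free pfree) subr0.
have [/in_NP[m qm]|qfree] := pselect (in_N q); last by rewrite extend0_free ?normr0.
by move: qK; rewrite qm extend0_principal; apply: vK.
Qed.

End ExtendByZero.

Section Supnorm.
Variable R : realType.
Implicit Type f : betaN -> R.

Lemma supnorm_le f (c : R) : (forall q, `|f q| <= c) -> supnorm f <= c.
Proof.
move=> fc; apply: ge_sup; first by exists `|f (principal_uf 0)|, (principal_uf 0).
by move=> _ [q _ <-].
Qed.

Lemma ler_supnorm f q : (exists M, forall q, `|f q| <= M) -> `|f q| <= supnorm f.
Proof.
move=> [M fM]; apply: ub_le_sup; last by exists q.
by exists M => _ [q' _ <-].
Qed.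

End Supnorm.

Section Clamp.
Variable R : realType.

Definition clamp (x : R) : R := if x < -1 then -1 else if 1 < x then 1 else x.

Lemma clamp_norm_le1 x : `|clamp x| <= 1.
Proof.
by rewrite /clamp ler_norml; case: ifP => ?; [|case: ifP => ?]; apply/andP; split; lra.
Qed.

Lemma clamp_lipschitz x y : `|clamp x - clamp y| <= `|x - y|.
Proof.
have := ler_norm (x - y); have := ler_norm (y - x); rewrite distrC /clamp => ? ?.
by do 4?case: ifP => ?; rewrite ler_norml; apply/andP; split; lra.
Qed.

Lemma clamp_addr_fixed_gt0 x d : 0 < d -> clamp (x + d) = x -> x = 1.
Proof. by rewrite /clamp; case: ifP => ?; [|case: ifP => ?]; lra. Qed.

Lemma clamp_addr_fixed_lt0 x d : d < 0 -> clamp (x + d) = x -> x = -1.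
Proof. by rewrite /clamp; case: ifP => ?; [|case: ifP => ?]; lra. Qed.

End Clamp.

Section ClampShift.
Variable R : realType.
Variable A : set nat.

Definition signed_harmonic (n : nat) : R := (if `[< A n >] then 1 else -1) / n.+1%:R.

Lemma signed_harmonic_norm n : `|signed_harmonic n| = n.+1%:R^-1.
Proof.
rewrite /signed_harmonic normrM [`|_^-1|]ger0_norm ?invr_ge0 //.
by case: ifP => _; rewrite ?normrN normr1 mul1r.
Qed.

Lemma signed_harmonic_small (e : R) : 0 < e ->
  exists K, forall n, (K < n)%N -> `|signed_harmonic n| < e.
Proof.
move=> e0; have e'0 : 0 <= e^-1 by rewrite invr_ge0 ltW.
exists (Num.bound e^-1) => n Kn; rewrite signed_harmonic_norm -[e]invrK.
rewrite ltf_pV2 ?posrE ?invr_gt0 //.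
apply: lt_trans (archi_boundP e'0) _; rewrite ltr_nat; exact: ltn_trans Kn _.
Qed.

Definition clamp_shift (g : betaN -> R) : betaN -> R :=
  fun q => clamp (g q + extend0 signed_harmonic q).

Lemma clamp_shift_continuous g : betaN_continuous g -> betaN_continuous (clamp_shift g).
Proof.
move=> /betaN_continuousP gc; apply/betaN_continuousP.
apply: (betaN_continuous_eps_comp (k := @clamp R)); first exact: clamp_lipschitz.
exact: betaN_continuous_epsD gc (extend0_continuous signed_harmonic_small).
Qed.

Lemma clamp_shift_free g q : ~ in_N q -> clamp_shift g q = clamp (g q).
Proof. by move=> qfree; rewrite /clamp_shift /= extend0_free ?addr0. Qed.

Lemma supnorm_clamp_shift g : supnorm (clamp_shift g) <= 1.
Proof. by apply: supnorm_le => q; apply: clamp_norm_le1. Qed.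

(* [supnorm] is meaningful only for bounded functions; the free point [p]
   makes continuous functions bounded. *)
Lemma clamp_shift_nonexpansive f g p : ~ in_N p ->
  betaN_continuous f -> betaN_continuous g ->
  supnorm (clamp_shift f - clamp_shift g) <= supnorm (f - g).
Proof.
move=> pfree /betaN_continuousP fc /betaN_continuousP gc.
have fg_bounded := betaN_continuous_eps_bounded pfree (betaN_continuous_epsB fc gc).
apply: supnorm_le => q; apply: le_trans (clamp_lipschitz _ _) _.
rewrite opprD addrACA subrr addr0.
exact: ler_supnorm fg_bounded.
Qed.

Lemma clamp_shift_fixed_principal f n : clamp_shift f = f ->
  f (principal_uf n) = if `[< A n >] then 1 else -1.
Proof.
move=> /(congr1 (fun h => h (principal_uf n))); rewrite /clamp_shift /=.
rewrite extend0_principal /signed_harmonic.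
have n0 : 0 < n.+1%:R^-1 :> R by rewrite invr_gt0.
case: ifP => _; rewrite ?mul1r ?mulN1r.
  by apply: clamp_addr_fixed_gt0.
by apply: clamp_addr_fixed_lt0; rewrite oppr_lt0.
Qed.

Lemma clamp_shift_fixed_uf f p : betaN_continuous f -> clamp_shift f = f ->
  uf p A -> f p = 1.
Proof.
move=> /betaN_continuousP fc Tf pA; apply: betaN_continuous_eps_uf_const fc pA _.
by move=> n An; rewrite clamp_shift_fixed_principal // asboolT.
Qed.

Lemma clamp_shift_fixed_not_uf f p : betaN_continuous f -> clamp_shift f = f ->
  ~ uf p A -> f p = -1.
Proof.
move=> /betaN_continuousP fc Tf /uf_setC pAc; apply: betaN_continuous_eps_uf_const fc pAc _.
by move=> n An; rewrite clamp_shift_fixed_principal // asboolF.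
Qed.

End ClampShift.

Theorem mainTheorem5 (R : realType) (p1 p2 : betaN) :
  p1 <> p2 -> ~ in_N p1 -> ~ in_N p2 ->
  ~ ball_fpp (X_sub R p1 p2).
Proof.
move=> p12 p1free p2free bfpp.
have [A [p1A p2A]] := uf_separate p12.
have [f [[[fc f12] _] Tf]] : exists f, in_ball (X_sub R p1 p2) f /\ clamp_shift A f = f.
  apply: bfpp => [f [[fc f12] _]|f g [[fc _] _] [[gc _] _]].
    split; [split|]; first exact: clamp_shift_continuous.
      by rewrite !clamp_shift_free // f12.
    exact: supnorm_clamp_shift.
  exact: clamp_shift_nonexpansive p1free fc gc.
move: f12; rewrite (clamp_shift_fixed_uf fc Tf p1A) (clamp_shift_fixed_not_uf fc Tf p2A).
lra.
Qed.
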